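(* Let $\rho_r\in(0,1)$, $\rho_w\in(0,1/2)$, and let $C_n\subseteq\{0,1\}^n$ be a (stochastic) code of rate $R$ that, over the $(\rho_r,\rho_w)$ adversarial wiretap channel, has decoding error at most $\delta_n$ against every adversary strategy and normalized equivocation $\eta_n=\Delta(C_n)/n$. Then for every sufficiently small $\xi>0$, over the $(\rho_r-\xi,\rho_w-\xi)$ random wiretap channel the code $C_n$ has decoding error at most $\delta_n+\exp(-\Omega(n))$ and normalized equivocation $H(\mathbf S\mid\mathbf Z)/n\ge \eta_n\bigl(1-\exp(-\Omega(n))\bigr)$, where the implied constants depend on $\rho_r,\rho_w,\xi$.
   Context: The $(\rho_r,\rho_w)$ adversarial wiretap channel: the transmitted codeword $x\in\{0,1\}^n$ encodes message $\mathbf S$; the adversary picks $\mathscr S\subseteq[n]$, $|\mathscr S|=\rho_r n$, sees $\mathbf V(\mathscr S)\in\{0,1,?\}^n$ (equal to $x_i$ on $\mathscr S$ and $?$ elsewhere), and adds an error of Hamming weight at most $\rho_w n$ whose distribution depends only on the code and the view; the receiver uses nearest-neighbor decoding. Decoding error is $\Pr[\hat{\mathbf S}\ne\mathbf S]$. With $\mathbf S$ uniform, the equivocation is $\Delta(C_n)=\min_{|\mathscr S|=\rho_r n}H(\mathbf S\mid\mathbf V(\mathscr S))$. The $(a,b)$ random wiretap channel sends $x$ through a binary erasure channel $\mathrm{BEC}(1-a)$ (each coordinate independently erased with probability $1-a$) to the eavesdropper, producing $\mathbf Z\in\{0,1,?\}^n$, and through a binary symmetric channel $\mathrm{BSC}(b)$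 to the receiver; its normalized equivocation is $H(\mathbf S\mid\mathbf Z)/n$ with $\mathbf S$ uniform. *)

From mathcomp Require Import all_boot.
From Stdlib Require Import Reals.
Set Implicit Arguments. Unset Strict Implicit. Unset Printing Implicit Defensive.

Local Open Scope R_scope.

Notation "\sumR_ ( i : T ) F" := (\big[Rplus/R0]_(i : T) F)
  (at level 41, F at level 41, i, T at level 50).

(* Binary words of length n, and eavesdropper views (None = erasure '?'). *)
Definition word (n : nat) := {ffun 'I_n -> bool}.
Definition view (n : nat) := {ffun 'I_n -> option bool}.

Definition xorw n (x e : word n) : word n := [ffun i => x i (+) e i].
Definition wt n (e : word n) : nat := #|[set i | e i]|.
Definition hdist n (x y : word n) : nat := #|[set i | x i != y i]|.

Definition viewof n (S : {set 'I_n}) (x : word n) : view n :=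
  [ffun i => if i \in S then Some (x i) else None].

Definition log2 (x : R) : R := ln x / ln 2.

Definition condH (A B : finType) (P : A -> B -> R) : R :=
  \sumR_(a : A) \sumR_(b : B)
    (if Rlt_dec 0 (P a b)
     then - (P a b) * log2 (P a b / (\sumR_(a' : A) P a' b))
     else 0).

(* A stochastic code: encoder enc s x = Pr[X = x | S = s]. *)
Definition valid_enc n (M : finType) (enc : M -> word n -> R) : Prop :=
  (forall s x, 0 <= enc s x) /\ (forall s, \sumR_(x : word n) enc s x = 1).

(* Nearest-neighbour decoding: dec y is the message of a codeword closest to y
   among all codewords (words with positive probability under some message). *)
Definition nn_decoder n (M : finType) (enc : M -> word n -> R) (dec : word n -> M)
  : Prop :=
  forall y : word n, exists x : word n,
    0 < enc (dec y) x /\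
    forall (s' : M) (x' : word n), 0 < enc s' x' -> (hdist x y <= hdist x' y)%nat.

Definition valid_adv n (rho_w : R) (adv : view n -> word n -> R) : Prop :=
  (forall v e, 0 <= adv v e) /\
  (forall v, \sumR_(e : word n) adv v e = 1) /\
  (forall v e, 0 < adv v e -> INR (wt e) <= rho_w * INR n).

Definition uniformP (M : finType) : R := / INR #|M|.

Definition err_ind (M : finType) (s shat : M) : R := if shat == s then 0 else 1.

Definition adv_err n (M : finType) (enc : M -> word n -> R) (dec : word n -> M)
  (S : {set 'I_n}) (adv : view n -> word n -> R) : R :=
  \sumR_(s : M) (uniformP M * \sumR_(x : word n) (enc s x *
     \sumR_(e : word n) (adv (viewof S x) e * err_ind s (dec (xorw x e))))).

Definition joint_adv n (M : finType) (enc : M -> word n -> R) (S : {set 'I_n})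
  (s : M) (v : view n) : R :=
  \sumR_(x : word n) (uniformP M * enc s x * (if viewof S x == v then 1 else 0)).

Definition bsc n (b : R) (e : word n) : R :=
  \big[Rmult/R1]_(i < n) (if e i then b else 1 - b).

(* BEC(1-a): each coordinate kept with prob a, erased with prob 1-a. *)
Definition bec n (a : R) (x : word n) (z : view n) : R :=
  \big[Rmult/R1]_(i < n)
    (match z i with None => 1 - a | Some c => if c == x i then a else 0 end).

Definition rnd_err n (M : finType) (enc : M -> word n -> R) (dec : word n -> M)
  (b : R) : R :=
  \sumR_(s : M) (uniformP M * \sumR_(x : word n) (enc s x *
     \sumR_(e : word n) (bsc b e * err_ind s (dec (xorw x e))))).

Definition joint_rnd n (M : finType) (enc : M -> word n -> R) (a : R)
  (s : M) (z : view n) : R :=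
  \sumR_(x : word n) (uniformP M * enc s x * bec a x z).

(* |S| = rho_r n, read as floor(rho_r n). *)
Definition nfloor (r : R) : nat := Z.to_nat (Int_part r).

From HB Require Import structures.
From mathcomp Require Import all_boot zify.
From Stdlib Require Import Reals Lra Lia ZArith.

(* Over BEC(1 - a) the erasure pattern e is a BSC(a) vector independent of the
   message, and given e the eavesdropper sees exactly the adversarial view on the
   support of e; hence H(S | Z) is the BSC(a)-average of H(S | V(supp e)).  When
   |supp e| <= rho_r n, enlarging supp e to a set of size rho_r n can only lower
   the equivocation, so that term is at least Delta; the remaining patterns have
   Chernoff-small probability.  For decoding, BSC(rho_w - xi) conditioned on weight
   <= rho_w n (the excess mass moved to the zero error) is an admissible adversary,
   so the random channel does worse only on the Chernoff tail; no property of the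
   decoder is needed. *)

Set Implicit Arguments. Unset Strict Implicit. Unset Printing Implicit Defensive.
Local Open Scope R_scope.

Lemma Rplus_associative : associative Rplus.
Proof. by move=> *; rewrite Rplus_assoc. Qed.

Lemma Rmult_associative : associative Rmult.
Proof. by move=> *; rewrite Rmult_assoc. Qed.

HB.instance Definition _ :=
  Monoid.isComLaw.Build R R0 Rplus Rplus_associative Rplus_comm Rplus_0_l.
HB.instance Definition _ :=
  Monoid.isComLaw.Build R R1 Rmult Rmult_associative Rmult_comm Rmult_1_l.
HB.instance Definition _ := Monoid.isMulLaw.Build R R0 Rmult Rmult_0_l Rmult_0_r.
HB.instance Definition _ :=
  Monoid.isAddLaw.Build R Rmult Rplus Rmult_plus_distr_r Rmult_plus_distr_l.

Lemma sumR_ge0 (I : Type) (r : seq I) (P : pred I) (F : I -> R) :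
  (forall i, P i -> 0 <= F i) -> 0 <= \big[Rplus/R0]_(i <- r | P i) F i.
Proof. by move=> H; apply: (big_ind (fun x => 0 <= x)) => //; [lra | move=> *; lra]. Qed.

Lemma sumR_le (I : Type) (r : seq I) (P : pred I) (F G : I -> R) :
  (forall i, P i -> F i <= G i) ->
  \big[Rplus/R0]_(i <- r | P i) F i <= \big[Rplus/R0]_(i <- r | P i) G i.
Proof. by move=> H; apply: (big_ind2 (fun x y => x <= y)) => //; [lra | move=> *; lra]. Qed.

Lemma prodR_ge0 (I : Type) (r : seq I) (P : pred I) (F : I -> R) :
  (forall i, P i -> 0 <= F i) -> 0 <= \big[Rmult/R1]_(i <- r | P i) F i.
Proof. by move=> H; apply: (big_ind (fun x => 0 <= x)) => //; [lra | move=> *; nra]. Qed.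

Lemma prodR_gt0 (I : Type) (r : seq I) (P : pred I) (F : I -> R) :
  (forall i, P i -> 0 < F i) -> 0 < \big[Rmult/R1]_(i <- r | P i) F i.
Proof. by move=> H; apply: (big_ind (fun x => 0 < x)) => //; [lra | move=> *; nra]. Qed.

Lemma prodR_const n (y : R) : \big[Rmult/R1]_(i < n) y = y ^ n.
Proof. by rewrite big_const_ord; elim: n => [|k IH] //=; rewrite IH. Qed.

Lemma sumR_const (I : finType) (c : R) : \sumR_(i : I) c = INR #|I| * c.
Proof.
rewrite big_const; elim: #|I| => [|k IH]; first by rewrite /=; ring.
by rewrite S_INR iterS IH; ring.
Qed.

Lemma sumR_ge_term (I : finType) (F : I -> R) i :
  (forall j, 0 <= F j) -> F i <= \sumR_(j : I) F j.
Proof.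
move=> H; rewrite (bigD1 i) //=.
have := @sumR_ge0 _ (index_enum I) (fun j => j != i) F (fun j _ => H j); lra.
Qed.

Lemma sumR_eq0_term (I : finType) (P : pred I) (F : I -> R) i :
  (forall j, P j -> 0 <= F j) -> \big[Rplus/R0]_(j | P j) F j = 0 -> P i -> F i = 0.
Proof.
move=> H + Pi; rewrite (bigD1 i) //=.
have := @sumR_ge0 _ (index_enum I) (fun j => P j && (j != i)) F
  (fun j hj => H j (andP hj).1).
have := H i Pi; lra.
Qed.

Lemma exp_le x y : x <= y -> exp x <= exp y.
Proof. by case=> [h | ->]; [left; exact: exp_increasing | lra]. Qed.

Lemma exp_mulINR t k : exp (t * INR k) = exp t ^ k.
Proof.
elim: k => [|k IH]; first by rewrite /= Rmult_0_r exp_0.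
by rewrite S_INR Rmult_plus_distr_l Rmult_1_r exp_plus IH /=; ring.
Qed.

Lemma ln_le_sub1 y : 0 < y -> ln y <= y - 1.
Proof. by move=> hy; have := exp_ineq1_le (ln y); rewrite exp_ln //; lra. Qed.

Lemma ln2_gt0 : 0 < ln 2.
Proof. by have := ln_lt_2; lra. Qed.

Lemma sum_word_prod n (u v : 'I_n -> R) :
  \sumR_(e : word n) \big[Rmult/R1]_(i < n) (if e i then u i else v i)
  = \big[Rmult/R1]_(i < n) (u i + v i).
Proof.
rewrite /word -(bigA_distr_bigA (fun i (b : bool) => if b then u i else v i)).
by apply: eq_bigr => i _; rewrite big_bool.
Qed.

Lemma prod_support_pow n (e : word n) (y : R) :
  \big[Rmult/R1]_(i < n) (if e i then y else 1) = y ^ wt e.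
Proof.
rewrite -big_mkcond /= /wt (eq_bigl (fun i => i \in [set i | e i])); last first.
  by move=> i; rewrite inE.
by rewrite big_const; elim: #|_| => [|k IH] //=; rewrite IH.
Qed.

Lemma bsc_ge0 n b (e : word n) : 0 <= b <= 1 -> 0 <= bsc b e.
Proof. by move=> hb; apply: prodR_ge0 => i _; case: (e i); lra. Qed.

Lemma bsc_gt0 n b (e : word n) : 0 < b < 1 -> 0 < bsc b e.
Proof. by move=> hb; apply: prodR_gt0 => i _; case: (e i); lra. Qed.

Lemma bsc_mgf n b y :
  \sumR_(e : word n) (bsc b e * y ^ wt e) = (b * y + (1 - b)) ^ n.
Proof.
rewrite -prodR_const -sum_word_prod; apply: eq_bigr => e _.
rewrite -prod_support_pow /bsc -big_split /=; apply: eq_bigr => i _.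
by case: (e i); lra.
Qed.

Lemma bsc_sum1 n b : \sumR_(e : word n) bsc b e = 1.
Proof.
have := bsc_mgf n b 1; rewrite Rmult_1_r Rplus_minus pow1 => <-.
by apply: eq_bigr => e _; rewrite pow1 Rmult_1_r.
Qed.

Definition bsc_tail n b th : R :=
  \sumR_(e : word n) (if Rlt_dec th (INR (wt e)) then bsc b e else 0).

Lemma bsc_tail_ge0 n b th : 0 <= b <= 1 -> 0 <= bsc_tail n b th.
Proof. by move=> hb; apply: sumR_ge0 => e _; case: Rlt_dec => _ /=; [exact: bsc_ge0 | lra]. Qed.

Lemma bsc_tail_compl n b th :
  \sumR_(e : word n) (if Rlt_dec th (INR (wt e)) then 0 else bsc b e) = 1 - bsc_tail n b th.
Proof.
apply: (Rplus_eq_reg_r (bsc_tail n b th)).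
rewrite [RHS]Rplus_comm Rplus_minus /bsc_tail -big_split /= -(bsc_sum1 n b).
by apply: eq_bigr => e _; case: Rlt_dec => _ /=; ring.
Qed.

Lemma bsc_tail_le_mgf n b th t : 0 <= b <= 1 -> 0 <= t ->
  bsc_tail n b th <= exp (- (t * th)) * (b * exp t + (1 - b)) ^ n.
Proof.
move=> hb ht; rewrite -bsc_mgf big_distrr /=; apply: sumR_le => e _.
have hbs := bsc_ge0 e hb.
rewrite -exp_mulINR -Rmult_assoc (Rmult_comm _ (bsc b e)) Rmult_assoc -exp_plus.
case: Rlt_dec => h /=.
- have : 1 <= exp (- (t * th) + t * INR (wt e)) by rewrite -exp_0; apply: exp_le; nra.
  nra.
- by have := exp_pos (- (t * th) + t * INR (wt e)); nra.
Qed.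

Definition chernoff_rate (xi : R) := xi * xi / (2 * (2 + xi)).

Lemma chernoff_rate_gt0 xi : 0 < xi -> 0 < chernoff_rate xi.
Proof. by move=> h; apply: Rdiv_lt_0_compat; nra. Qed.

(* The exponent of [bsc_tail_le_mgf] at [t = xi / (2 + xi)]; [exp t <= 1 + xi / 2]
   follows from [exp (- t) >= 1 - t = 2 / (2 + xi)]. *)
Lemma chernoff_exponent b xi : 0 <= b <= 1 -> 0 < xi ->
  b * (exp (xi / (2 + xi)) - 1) - xi / (2 + xi) * (b + xi) <= - chernoff_rate xi.
Proof.
move=> hb hxi; set t := xi / (2 + xi).
have ht : t * (2 + xi) = xi by rewrite /t; field; lra.
have hexp : exp t <= 1 + xi / 2.
  have one_sub_t : 1 + - t = 2 / (2 + xi) by rewrite /t; field; lra.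
  have exp_inv : exp t * exp (- t) = 1 by rewrite -exp_plus Rplus_opp_r exp_0.
  have hbound : exp t * (2 / (2 + xi)) <= 1.
    rewrite -exp_inv -one_sub_t.
    by apply: Rmult_le_compat_l; [exact: Rlt_le (exp_pos t) | exact: exp_ineq1_le].
  have := Rmult_le_compat_r (1 + xi / 2) _ _ (ltac:(lra)) hbound.
  by rewrite Rmult_assoc (_ : 2 / (2 + xi) * (1 + xi / 2) = 1); [lra | field; lra].
have hrate : chernoff_rate xi * (2 + xi) = xi * xi / 2 by rewrite /chernoff_rate; field; lra.
suff : (b * (exp t - 1) - t * (b + xi)) * (2 + xi) <= - chernoff_rate xi * (2 + xi) by nra.
have : b * (exp t - 1) <= b * (xi / 2) by apply: Rmult_le_compat_l; lra.
nra.
Qed.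

Lemma bsc_tail_chernoff n rho xi : 0 <= rho - xi <= 1 -> 0 < xi ->
  bsc_tail n (rho - xi) (rho * INR n) <= exp (- (chernoff_rate xi * INR n)).
Proof.
rewrite (_ : rho * INR n = (rho - xi + xi) * INR n); last ring.
move: (rho - xi) => b hb hxi; set t := xi / (2 + xi).
have ht : 0 <= t by apply: Rlt_le; apply: Rdiv_lt_0_compat; lra.
apply: (Rle_trans _ _ _ (bsc_tail_le_mgf n _ hb ht)).
have hpow : (b * exp t + (1 - b)) ^ n <= exp (b * (exp t - 1) * INR n).
  rewrite exp_mulINR; apply: pow_incr; split.
  - by have := exp_pos t; nra.
  - by have := exp_ineq1_le (b * (exp t - 1)); lra.
apply: (Rle_trans _ (exp (- (t * ((b + xi) * INR n))) * exp (b * (exp t - 1) * INR n))).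
  by apply: Rmult_le_compat_l => //; apply: Rlt_le; apply: exp_pos.
rewrite -exp_plus; apply: exp_le.
have := Rmult_le_compat_r _ _ _ (pos_INR n) (chernoff_exponent hb hxi).
by rewrite -/t; lra.
Qed.

Definition hterm (p q : R) : R := if Rlt_dec 0 p then - p * log2 (p / q) else 0.

Lemma condH_hterm (A B : finType) (P : A -> B -> R) :
  condH P = \sumR_(a : A) \sumR_(b : B) hterm (P a b) (\sumR_(a' : A) P a' b).
Proof. by []. Qed.

Lemma hterm_ge0 p q : 0 <= p <= q -> 0 <= hterm p q.
Proof.
move=> hpq; rewrite /hterm /log2; case: Rlt_dec => hp /=; last exact: Rle_refl.
have hq : 0 < q by lra.
have hpq1 : p / q <= 1.
  have := Rinv_0_lt_compat _ hq; have : q * / q = 1 by field; lra.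
  by rewrite /Rdiv; nra.
have hl : ln (p / q) <= 0 by have := ln_le_sub1 (Rdiv_lt_0_compat p q hp hq); lra.
have hl2 : ln (p / q) * / ln 2 <= 0 by have := Rinv_0_lt_compat _ ln2_gt0; nra.
by rewrite /Rdiv in hl2 *; nra.
Qed.

Lemma hterm_scale w p q : 0 < w -> hterm (w * p) (w * q) = w * hterm p q.
Proof.
move=> hw; rewrite /hterm.
case: Rlt_dec => h1; case: Rlt_dec => h2 /=; try (exfalso; nra); last ring.
have -> : w * p / (w * q) = p / q.
  rewrite /Rdiv Rinv_mult (_ : w * p * (/ w * / q) = w * / w * (p * / q)); last ring.
  by rewrite Rinv_r; [ring | lra].
ring.
Qed.

(* [ln y <= y - 1] at [y = q r / p]. *)
Lemma hterm_le_tangent p q r : 0 <= p <= q -> 0 < r ->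
  hterm p q <= p * (- log2 r - / ln 2) + q * (r / ln 2).
Proof.
move=> hpq hr; have il2 := Rinv_0_lt_compat _ ln2_gt0.
rewrite /hterm /log2; case: Rlt_dec => hp /=; last first.
  have -> : p = 0 by lra.
  by have := Rdiv_lt_0_compat _ _ hr ln2_gt0; nra.
have hq : 0 < q by lra.
have hy : 0 < q * r / p by apply: Rdiv_lt_0_compat; nra.
have hsplit : ln r = ln (p / q) + ln (q * r / p).
  rewrite -ln_mult //; last exact: Rdiv_lt_0_compat.
  by congr ln; field; lra.
have hle : p * ln (q * r / p) <= q * r - p.
  have -> : q * r - p = p * (q * r / p - 1) by field; lra.
  by apply: Rmult_le_compat_l; [lra | exact: ln_le_sub1].
have key : - p * ln (p / q) <= - p * ln r + (q * r - p) by rewrite hsplit; lra.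
have := Rmult_le_compat_r _ _ _ (Rlt_le _ _ il2) key.
by rewrite /Rdiv => ?; lra.
Qed.

Lemma log_sum (I : finType) (P : pred I) (p q : I -> R) :
  (forall i, P i -> 0 <= p i <= q i) ->
  \big[Rplus/R0]_(i | P i) hterm (p i) (q i) <=
  hterm (\big[Rplus/R0]_(i | P i) p i) (\big[Rplus/R0]_(i | P i) q i).
Proof.
move=> H; set ps := \big[Rplus/R0]_(i | P i) p i; set qs := \big[Rplus/R0]_(i | P i) q i.
have ps0 : 0 <= ps by apply: sumR_ge0 => i /H; lra.
have psqs : ps <= qs by apply: sumR_le => i /H; lra.
case: (Rle_lt_or_eq_dec 0 ps ps0) => hps; last first.
  rewrite {2}/hterm; case: Rlt_dec => h /=; first lra.
  rewrite big1; first exact: Rle_refl.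
  move=> i Pi; have -> : p i = 0 by apply: (sumR_eq0_term (P := P)) => // j /H; lra.
  by rewrite /hterm; case: Rlt_dec => //= ?; lra.
have hr : 0 < ps / qs by apply: Rdiv_lt_0_compat; lra.
apply: (Rle_trans _ (\big[Rplus/R0]_(i | P i)
   (p i * (- log2 (ps / qs) - / ln 2) + q i * (ps / qs / ln 2)))).
  by apply: sumR_le => i Pi; exact: hterm_le_tangent (H i Pi) hr.
rewrite big_split /= -!big_distrl /= -/ps -/qs /hterm /log2.
case: Rlt_dec => // _ /=.
have -> : qs * (ps / qs / ln 2) = ps / ln 2 by field; have := ln2_gt0; lra.
by rewrite /Rdiv; lra.
Qed.

Lemma condH_ext (A B : finType) (P Q : A -> B -> R) :
  (forall a b, P a b = Q a b) -> condH P = condH Q.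
Proof.
move=> H; rewrite !condH_hterm; apply: eq_bigr => a _; apply: eq_bigr => b _.
by rewrite H; congr hterm; apply: eq_bigr => a' _; exact: H.
Qed.

Lemma condH_ge0 (A B : finType) (P : A -> B -> R) :
  (forall a b, 0 <= P a b) -> 0 <= condH P.
Proof.
move=> H; rewrite condH_hterm; apply: sumR_ge0 => a _; apply: sumR_ge0 => b _.
apply: hterm_ge0; split; first exact: H.
by apply: sumR_ge_term => a'; exact: H.
Qed.

Lemma condH_coarsen (A B B' : finType) (P : A -> B' -> R) (f : B' -> B) :
  (forall a b, 0 <= P a b) ->
  condH P <= condH (fun a b => \big[Rplus/R0]_(b' | f b' == b) P a b').
Proof.
move=> H; rewrite !condH_hterm; apply: sumR_le => a _.
rewrite (partition_big f xpredT) //=; apply: sumR_le => b _.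
have -> : \sumR_(a' : A) \big[Rplus/R0]_(b' | f b' == b) P a' b'
   = \big[Rplus/R0]_(b' | f b' == b) \sumR_(a' : A) P a' b'.
  rewrite (exchange_big_dep (fun b' => f b' == b)) //=.
  by apply: eq_bigr => b' hb'; apply: eq_bigl => a'; rewrite hb'.
apply: log_sum => b' _; split; first exact: H.
by apply: sumR_ge_term => a'; exact: H.
Qed.

Lemma uniformP_ge0 (M : finType) : 0 <= uniformP M.
Proof.
rewrite /uniformP; case: (posnP #|M|) => [-> | hM]; first by rewrite /= Rinv_0; lra.
by apply: Rlt_le; apply: Rinv_0_lt_compat; apply: lt_0_INR; lia.
Qed.

Lemma joint_adv_ge0 n (M : finType) (enc : M -> word n -> R) T s v :
  (forall s x, 0 <= enc s x) -> 0 <= joint_adv enc T s v.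
Proof.
move=> H; apply: sumR_ge0 => x _.
by have := uniformP_ge0 M; have := H s x; case: eqP => _; nra.
Qed.

Definition restrict_view n (T : {set 'I_n}) (v : view n) : view n :=
  [ffun i => if i \in T then v i else None].

Lemma restrict_viewof n (T T' : {set 'I_n}) (x : word n) :
  T \subset T' -> restrict_view T (viewof T' x) = viewof T x.
Proof.
move=> sub; apply/ffunP => i; rewrite !ffunE.
by case hi: (i \in T) => //; rewrite (subsetP sub i hi).
Qed.

Lemma sum_fiber_indicator (B : finType) (g : B -> B) (v w : B) :
  \big[Rplus/R0]_(v' | g v' == v) (if w == v' then 1 else 0) = if g w == v then 1 else 0.
Proof.
case: eqP => h.
- rewrite (bigD1 w); last exact/eqP.
  rewrite eqxx big1 /=; first by rewrite Rplus_0_r.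
  by move=> v' /andP [_ hv']; rewrite eq_sym (negbTE hv').
- by apply: big1 => v' /eqP hv'; case: eqP => // hw; subst; case: h.
Qed.

Lemma joint_adv_restrict n (M : finType) (enc : M -> word n -> R) (T T' : {set 'I_n}) s v :
  T \subset T' ->
  joint_adv enc T s v = \big[Rplus/R0]_(v' | restrict_view T v' == v) joint_adv enc T' s v'.
Proof.
move=> sub; rewrite /joint_adv exchange_big /=; apply: eq_bigr => x _.
by rewrite -big_distrr /= sum_fiber_indicator restrict_viewof.
Qed.

Lemma condH_joint_adv_antimono n (M : finType) (enc : M -> word n -> R) (T T' : {set 'I_n}) :
  (forall s x, 0 <= enc s x) -> T \subset T' ->
  condH (joint_adv enc T') <= condH (joint_adv enc T).
Proof.
move=> H sub; rewrite (condH_ext (fun s v => joint_adv_restrict enc s v sub)).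
by apply: condH_coarsen => s v; exact: joint_adv_ge0.
Qed.

Lemma subset_extend_card n k (T : {set 'I_n}) :
  (#|T| <= k <= n)%nat -> exists2 T' : {set 'I_n}, T \subset T' & #|T'| = k.
Proof.
elim: k T => [|k IH] T /andP [hT hk].
  by exists T => //; apply/eqP; rewrite -leqn0.
have [hTk | hTk] := eqVneq #|T| k.+1; first by exists T.
have [T2 sub2 card2] : exists2 T2 : {set 'I_n}, T \subset T2 & #|T2| = k.
  by apply: IH; apply/andP; split; lia.
have /card_gt0P [i] : (0 < #|~: T2|)%nat by have := cardsC T2; rewrite card_ord; lia.
rewrite inE => hi; exists (i |: T2); first exact: subset_trans sub2 (subsetUr _ _).
by rewrite cardsU1 hi card2.
Qed.

Lemma nfloor_spec r : 0 <= r -> INR (nfloor r) <= r < INR (nfloor r) + 1.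
Proof.
move=> hr; have [h1 h2] := base_Int_part r.
have hz : (0 <= Int_part r)%Z.
  have : (-1 < Int_part r)%Z by apply: lt_IZR; lra.
  lia.
by rewrite /nfloor INR_IZR_INZ Z2Nat.id //; lra.
Qed.

Definition unerased n (z : view n) : word n := [ffun i => z i != None].
Definition support n (e : word n) : {set 'I_n} := [set i | e i].

Lemma unerased_viewof n (e x : word n) : unerased (viewof (support e) x) = e.
Proof. by apply/ffunP => i; rewrite !ffunE inE; case: (e i). Qed.

Lemma eq_ffun_indicator (A : finType) n (f g : {ffun 'I_n -> A}) :
  (if f == g then 1 else 0) = \big[Rmult/R1]_(i < n) (if f i == g i then 1 else 0).
Proof.
case: eqP => [-> | hne]; first by rewrite big1 // => i _; rewrite eqxx.
case: (pickP (fun i => f i != g i)) => [i hi | hall].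
  by rewrite (bigD1 i) //= (negbTE hi) Rmult_0_l.
by exfalso; apply: hne; apply/ffunP => i; move/negbFE/eqP: (hall i).
Qed.

Lemma bec_factor n a (x : word n) (z : view n) :
  bec a x z = bsc a (unerased z) * (if viewof (support (unerased z)) x == z then 1 else 0).
Proof.
rewrite eq_ffun_indicator /bec /bsc -big_split /=; apply: eq_bigr => i _.
rewrite !ffunE inE !ffunE.
by case: (z i) => [c|] /=; [case: (x i); case: c => /=; lra | lra].
Qed.

Lemma joint_rnd_factor n (M : finType) (enc : M -> word n -> R) a s z :
  joint_rnd enc a s z = bsc a (unerased z) * joint_adv enc (support (unerased z)) s z.
Proof.
rewrite /joint_rnd /joint_adv big_distrr /=; apply: eq_bigr => x _.
by rewrite bec_factor; ring.
Qed.

Lemma joint_adv_off_pattern n (M : finType) (enc : M -> word n -> R) (e : word n) s z :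
  unerased z != e -> joint_adv enc (support e) s z = 0.
Proof.
move=> hne; rewrite /joint_adv big1 // => x _.
by case: eqP => h; [move: hne; rewrite -h unerased_viewof eqxx | ring].
Qed.

Lemma condH_joint_rnd_mixture n (M : finType) (enc : M -> word n -> R) a :
  0 < a < 1 ->
  condH (joint_rnd enc a) = \sumR_(e : word n) (bsc a e * condH (joint_adv enc (support e))).
Proof.
move=> ha; rewrite condH_hterm.
have hterm_factor s z :
  hterm (joint_rnd enc a s z) (\sumR_(s' : M) joint_rnd enc a s' z)
  = bsc a (unerased z) * hterm (joint_adv enc (support (unerased z)) s z)
       (\sumR_(s' : M) joint_adv enc (support (unerased z)) s' z).
  under eq_bigr => s' _ do rewrite joint_rnd_factor.
  by rewrite joint_rnd_factor -big_distrr /= hterm_scale //; exact: bsc_gt0.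
under eq_bigr => s _ do (under eq_bigr => z _ do rewrite hterm_factor).
under eq_bigr => s _ do rewrite (partition_big (@unerased n) xpredT) //=.
rewrite exchange_big /=; apply: eq_bigr => e _.
rewrite condH_hterm big_distrr /=; apply: eq_bigr => s _.
rewrite big_distrr /= [in RHS](bigID (fun z => unerased z == e)) /=.
rewrite [X in _ = _ + X]big1; last first.
  move=> z hz; rewrite joint_adv_off_pattern //.
  by rewrite /hterm; case: Rlt_dec => /= h; [lra | ring].
by rewrite Rplus_0_r; apply: eq_bigr => z /eqP ->.
Qed.

Lemma condH_joint_rnd_ge n (M : finType) (enc : M -> word n -> R) a k th Delta :
  (forall s x, 0 <= enc s x) -> 0 < a < 1 -> (k <= n)%nat -> th < INR k + 1 ->
  (forall T : {set 'I_n}, #|T| = k -> Delta <= condH (joint_adv enc T)) ->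
  Delta * (1 - bsc_tail n a th) <= condH (joint_rnd enc a).
Proof.
move=> henc ha hkn hth hDelta.
rewrite condH_joint_rnd_mixture // -{1}(bsc_sum1 n a) Rmult_minus_distr_l /bsc_tail !big_distrr /=.
suff : \sumR_(e : word n) (Delta * bsc a e) <= \sumR_(e : word n)
  (bsc a e * condH (joint_adv enc (support e)) +
   Delta * (if Rlt_dec th (INR (wt e)) then bsc a e else 0)).
  by rewrite big_split /= /word; lra.
apply: sumR_le => e _.
have hbsc := bsc_ge0 e (ltac:(lra) : 0 <= a <= 1).
have hH := condH_ge0 (fun s v => joint_adv_ge0 (support e) s v henc).
case: Rlt_dec => hwt /=; first nra.
have hwk : (#|support e| <= k <= n)%nat.
  have hwt' : INR #|support e| <= th := Rnot_lt_le _ _ hwt.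
  by rewrite hkn andbT; apply/leP/le_S_n/INR_lt; rewrite !S_INR; lra.
have [T sub card] := subset_extend_card hwk.
have := condH_joint_adv_antimono henc sub; have := hDelta T card; nra.
Qed.

Definition truncated_bsc_adv n b th : view n -> word n -> R := fun _ e =>
  (if Rlt_dec th (INR (wt e)) then 0 else bsc b e) +
  (if e == [ffun => false] then bsc_tail n b th else 0).
Arguments truncated_bsc_adv : clear implicits.

Lemma truncated_bsc_adv_valid n b rho_w : 0 <= b <= 1 -> 0 <= rho_w ->
  valid_adv rho_w (truncated_bsc_adv n b (rho_w * INR n)).
Proof.
move=> hb hw; have htail := bsc_tail_ge0 n (rho_w * INR n) hb.
have hlight (e : word n) : 0 <= (if Rlt_dec (rho_w * INR n) (INR (wt e)) then 0 else bsc b e).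
  by case: Rlt_dec => _ /=; [lra | exact: bsc_ge0].
split; [|split].
- by move=> v e; have := hlight e; rewrite /truncated_bsc_adv; case: eqP => _; lra.
- move=> v; rewrite /truncated_bsc_adv big_split /= bsc_tail_compl.
  rewrite (bigD1 [ffun => false]) //= eqxx big1; first ring.
  by move=> e /negbTE ->.
- move=> v e; rewrite /truncated_bsc_adv; case: Rlt_dec => hwt /=; last lra.
  case: eqP => [-> _ | _]; last lra.
  have -> : wt ([ffun => false] : word n) = 0%nat.
    by apply/eqP; rewrite cards_eq0; apply/eqP/setP => i; rewrite !inE ffunE.
  by have := pos_INR n; rewrite /=; nra.
Qed.

Lemma sum_uniform_enc n (M : finType) (enc : M -> word n -> R) (K : R) :
  (0 < #|M|)%nat -> (forall s, \sumR_(x : word n) enc s x = 1) ->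
  \sumR_(s : M) (uniformP M * \sumR_(x : word n) (enc s x * K)) = K.
Proof.
move=> hM hs; under eq_bigr => s _ do rewrite -big_distrl /= hs Rmult_1_l.
by rewrite sumR_const /uniformP; field; apply: not_0_INR; lia.
Qed.

Lemma rnd_err_le_truncated n (M : finType) (enc : M -> word n -> R) dec S b th :
  (0 < #|M|)%nat -> valid_enc enc -> 0 <= b <= 1 ->
  rnd_err enc dec b <= adv_err enc dec S (truncated_bsc_adv n b th) + bsc_tail n b th.
Proof.
move=> hM [henc hsum] hb.
rewrite -(sum_uniform_enc (bsc_tail n b th) hM hsum) /rnd_err /adv_err -big_split /=.
apply: sumR_le => s _; rewrite -Rmult_plus_distr_l.
apply: Rmult_le_compat_l; first exact: uniformP_ge0.
rewrite -big_split /=; apply: sumR_le => x _; rewrite -Rmult_plus_distr_l.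
apply: Rmult_le_compat_l; first exact: henc.
rewrite /bsc_tail -big_split /=; apply: sumR_le => e _.
have herr : 0 <= err_ind s (dec (xorw x e)) <= 1 by rewrite /err_ind; case: eqP => _; lra.
have hbsc := bsc_ge0 e hb; have htail := bsc_tail_ge0 n th hb.
have hzero : 0 <= (if e == [ffun => false] then bsc_tail n b th else 0).
  by case: eqP => _; lra.
have := Rmult_le_pos _ _ hzero herr.1.
have := Rmult_le_pos _ _ hbsc (ltac:(lra) : 0 <= 1 - err_ind s (dec (xorw x e))).
by rewrite /truncated_bsc_adv; case: Rlt_dec => _ /=; nra.
Qed.

Theorem theorem3p2 :
  forall rho_r rho_w : R,
  0 < rho_r < 1 -> 0 < rho_w < / 2 ->
  exists xi0 : R, 0 < xi0 /\
  forall xi : R, 0 < xi < xi0 ->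
  exists (c : R) (N0 : nat), 0 < c /\
  forall (n : nat), (N0 <= n)%nat ->
  forall (M : finType) (enc : M -> word n -> R) (dec : word n -> M)
         (delta Delta : R),
    (0 < #|M|)%nat ->
    valid_enc enc ->
    nn_decoder enc dec ->
    (forall (S : {set 'I_n}) (adv : view n -> word n -> R),
        #|S| = nfloor (rho_r * INR n) -> valid_adv rho_w adv ->
        adv_err enc dec S adv <= delta) ->
    (forall S : {set 'I_n}, #|S| = nfloor (rho_r * INR n) ->
        Delta <= condH (joint_adv enc S)) ->
    (exists S : {set 'I_n}, #|S| = nfloor (rho_r * INR n) /\
        condH (joint_adv enc S) = Delta) ->
    rnd_err enc dec (rho_w - xi) <= delta + exp (- (c * INR n)) /\
    condH (joint_rnd enc (rho_r - xi)) / INR n >=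
      (Delta / INR n) * (1 - exp (- (c * INR n))).
Proof.
move=> rho_r rho_w hr hw; exists (Rmin rho_r rho_w).
split=> [|xi [hxi /Rmin_Rgt_l [hxr hxw]]]; first by apply: Rmin_glb_lt; lra.
exists (chernoff_rate xi), 1%nat; split=> [|n hn M enc dec delta Delta hM henc _ hadv hDelta].
  exact: chernoff_rate_gt0.
case=> S0 [hS0 hS0D]; have hn0 : 0 < INR n by apply: lt_0_INR; lia.
split.
- have hb : 0 <= rho_w - xi <= 1 by lra.
  have := hadv S0 _ hS0 (truncated_bsc_adv_valid n hb (ltac:(lra) : 0 <= rho_w)).
  have := rnd_err_le_truncated dec S0 (rho_w * INR n) hM henc hb.
  by have := bsc_tail_chernoff n hb hxi; lra.
- have [hk hk1] := nfloor_spec (ltac:(nra) : 0 <= rho_r * INR n).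
  have hkn : (nfloor (rho_r * INR n) <= n)%nat by apply/leP; apply: INR_le; nra.
  have hmixture := condH_joint_rnd_ge henc.1 (ltac:(lra) : 0 < rho_r - xi < 1) hkn hk1 hDelta.
  have htail := bsc_tail_chernoff n (ltac:(lra) : 0 <= rho_r - xi <= 1) hxi.
  have hD0 : 0 <= Delta.
    by rewrite -hS0D; exact: condH_ge0 (fun s v => joint_adv_ge0 S0 s v henc.1).
  have hmain : Delta * (1 - exp (- (chernoff_rate xi * INR n))) <=
               condH (joint_rnd enc (rho_r - xi)).
    by apply: Rle_trans hmixture; apply: Rmult_le_compat_l; lra.
  have := Rmult_le_compat_r _ _ _ (Rlt_le _ _ (Rinv_0_lt_compat _ hn0)) hmain.
  by rewrite /Rdiv; lra.
Qed.
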